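(* There exists a transcendental entire function $f$ such that $f^{(s)}(\overline{\mathbb{Q}}) \subseteq \mathbb{Q}(i)$ for all integers $s \geq 0$.
   Context: $\overline{\mathbb{Q}}$ denotes the set of algebraic numbers in $\mathbb{C}$. A transcendental entire function is an entire function $\mathbb{C}\to\mathbb{C}$ that is not a polynomial. $f^{(s)}$ denotes the $s$-th derivative of $f$, with $f^{(0)}=f$. *)

From Stdlib Require Import Reals QArith ZArith List Lra.
Open Scope R_scope.

Definition CC : Type := (R * R)%type.
Definition Cre (z : CC) : R := fst z.
Definition Cim (z : CC) : R := snd z.
Definition Cof (x : R) : CC := (x, 0).
Definition C0 : CC := (0, 0).
Definition C1 : CC := (1, 0).
Definition Ci : CC := (0, 1).
Definition Cadd (z w : CC) : CC := (fst z + fst w, snd z + snd w).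
Definition Copp (z : CC) : CC := (- fst z, - snd z).
Definition Csub (z w : CC) : CC := Cadd z (Copp w).
Definition Cmul (z w : CC) : CC :=
  (fst z * fst w - snd z * snd w, fst z * snd w + snd z * fst w).
Definition Cnorm (z : CC) : R := sqrt (fst z * fst z + snd z * snd z).

Fixpoint Cpoly_eval (cs : list CC) (z : CC) : CC :=
  match cs with
  | nil => C0
  | c :: cs' => Cadd c (Cmul z (Cpoly_eval cs' z))
  end.

Definition Cderiv_at (f : CC -> CC) (z l : CC) : Prop :=
  forall eps : R, 0 < eps -> exists delta : R, 0 < delta /\
    forall h : CC, 0 < Cnorm h -> Cnorm h < delta ->
      Cnorm (Csub (Csub (f (Cadd z h)) (f z)) (Cmul l h)) <= eps * Cnorm h.

Definition entire (f : CC -> CC) : Prop :=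
  forall z : CC, exists l : CC, Cderiv_at f z l.

Definition is_polynomial_fun (f : CC -> CC) : Prop :=
  exists cs : list CC, forall z : CC, f z = Cpoly_eval cs z.

Definition transcendental_entire (f : CC -> CC) : Prop :=
  entire f /\ ~ is_polynomial_fun f.

Definition derivs_of (f : CC -> CC) (D : nat -> CC -> CC) : Prop :=
  D O = f /\ forall (s : nat) (z : CC), Cderiv_at (D s) z (D (S s) z).

Definition algebraic (z : CC) : Prop :=
  exists cs : list Z, (exists c, In c cs /\ c <> 0%Z) /\
    Cpoly_eval (map (fun c => Cof (IZR c)) cs) z = C0.

Definition in_Qi (z : CC) : Prop :=
  exists p q : Q, z = (Q2R p, Q2R q).

From Pilot Require Import Defs.
From Stdlib Require Import Reals QArith ZArith List Lra Lia
  Classical ClassicalEpsilon FunctionalExtensionality Cantor.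
From Coquelicot Require Import Hierarchy Series.
From Coquelicot Require Complex.
Open Scope R_scope.

(* List the algebraic numbers as a sequence [node] in which each of them recurs
   infinitely often, and attach to the index m the derivative order [order m] =
   number of earlier occurrences of [node m]; every pair (algebraic z, order s)
   is then attached to exactly one index.  An interpolation polynomial
   [basis m] has a nonzero derivative of order [order m] at [node m], while the
   derivatives attached to all earlier indices vanish at their nodes.  Put
   f = sum_m coef m * basis m, choosing coef m inductively: small enough that
   the m-th term is at most (1/2)^m on the disc of radius m, so that the series
   may be differentiated termwise; and such that the derivative of order
   [order m] of f at [node m], which only involves the first m + 1 terms, lies
   in Q(i) \ {0}.  Since no derivative of f vanishes at 0, f is no polynomial.

   Functions are handled as "towers" (a function with its list of derivatives);
   polynomial towers, built by the Leibniz rule, obey uniform Taylor bounds,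
   which yield both differentiability and termwise differentiation. *)

Lemma CC_ext (a b : CC) : fst a = fst b -> snd a = snd b -> a = b.
Proof. destruct a, b; simpl; intros; subst; reflexivity. Qed.

Ltac CC_ring :=
  unfold Csub, Cadd, Copp, Cmul, Cof, C0, Defs.C1; apply CC_ext; cbn [fst snd]; ring.

Lemma Cnorm_Cmod (z : CC) : Cnorm z = Complex.Cmod z.
Proof. unfold Cnorm, Complex.Cmod. f_equal. ring. Qed.

Lemma Cnorm_nonneg (z : CC) : 0 <= Cnorm z.
Proof. apply sqrt_pos. Qed.

Lemma Cnorm_mul (a b : CC) : Cnorm (Cmul a b) = Cnorm a * Cnorm b.
Proof. rewrite !Cnorm_Cmod. apply Complex.Cmod_mult. Qed.

Lemma Cnorm_triangle (a b : CC) : Cnorm (Cadd a b) <= Cnorm a + Cnorm b.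
Proof. rewrite !Cnorm_Cmod. apply Complex.Cmod_triangle. Qed.

Lemma Cnorm_opp (a : CC) : Cnorm (Copp a) = Cnorm a.
Proof. rewrite !Cnorm_Cmod. apply Complex.Cmod_opp. Qed.

Lemma Cnorm_sub (a b : CC) : Cnorm (Csub a b) <= Cnorm a + Cnorm b.
Proof. unfold Csub. rewrite <- (Cnorm_opp b). apply Cnorm_triangle. Qed.

Lemma Cnorm_Cof (x : R) : Cnorm (Cof x) = Rabs x.
Proof. rewrite Cnorm_Cmod. apply Complex.Cmod_R. Qed.

Lemma Cnorm_C0 : Cnorm C0 = 0.
Proof. rewrite Cnorm_Cmod. apply Complex.Cmod_0. Qed.

Lemma Cnorm_pos (z : CC) : z <> C0 -> 0 < Cnorm z.
Proof. rewrite Cnorm_Cmod. apply Complex.Cmod_gt_0. Qed.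

Lemma Cnorm_fst (z : CC) : Rabs (fst z) <= Cnorm z.
Proof.
  rewrite Cnorm_Cmod. pose proof (Complex.Rmax_Cmod z).
  pose proof (Rmax_l (Rabs (fst z)) (Rabs (snd z))). lra.
Qed.

Lemma Cnorm_snd (z : CC) : Rabs (snd z) <= Cnorm z.
Proof.
  rewrite Cnorm_Cmod. pose proof (Complex.Rmax_Cmod z).
  pose proof (Rmax_r (Rabs (fst z)) (Rabs (snd z))). lra.
Qed.

Lemma Cnorm_le_parts (z : CC) : Cnorm z <= Rabs (fst z) + Rabs (snd z).
Proof.
  replace z with (Cadd (Cof (fst z)) (Cmul (Cof (snd z)) Ci)) at 1
    by (unfold Ci; destruct z; CC_ring).
  eapply Rle_trans; [apply Cnorm_triangle|].
  rewrite Cnorm_mul, !Cnorm_Cof, Cnorm_Cmod. change Ci with Complex.Ci.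
  rewrite Complex.Cmod_Ci. lra.
Qed.

Lemma Cmul_neq0 (a b : CC) : a <> C0 -> b <> C0 -> Cmul a b <> C0.
Proof.
  intros Ha Hb E. apply Cnorm_pos in Ha. apply Cnorm_pos in Hb.
  pose proof Cnorm_C0 as H0. rewrite <- E, Cnorm_mul in H0. nra.
Qed.

Lemma Csub_neq0 (a b : CC) : a <> b -> Csub a b <> C0.
Proof.
  intros H E; apply H. destruct a, b. unfold Csub, Cadd, Copp, C0 in E; simpl in E.
  injection E; intros; f_equal; lra.
Qed.

Definition CC_eq_dec (a b : CC) : {a = b} + {a <> b}.
Proof.
  destruct a as [a1 a2], b as [b1 b2].
  destruct (Req_EM_T a1 b1) as [->|E1]; [destruct (Req_EM_T a2 b2) as [->|E2]|].
  - left; reflexivity.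
  - right; intro E; injection E; intros; contradiction.
  - right; intro E; injection E; intros; contradiction.
Defined.

(** Complex differentiability. *)

Lemma Cderiv_of_quadratic_remainder (f : CC -> CC) (z l : CC) (K : R) : 0 <= K ->
  (forall h, Cnorm h <= 1 ->
     Cnorm (Csub (Csub (f (Cadd z h)) (f z)) (Cmul l h)) <= K * (Cnorm h * Cnorm h)) ->
  Cderiv_at f z l.
Proof.
  intros HK Hrem eps Heps.
  pose proof (Rmin_l 1 (eps / (K + 1))) as Hdelta1. pose proof (Rmin_r 1 (eps / (K + 1))) as Hdelta.
  set (delta := Rmin 1 (eps / (K + 1))) in *.
  assert (Hdelta_eps : delta * (K + 1) <= eps).
  { apply (Rmult_le_compat_r (K + 1)) in Hdelta; [|lra].
    replace (eps / (K + 1) * (K + 1)) with eps in Hdelta by (field; lra). exact Hdelta. }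
  exists delta. split.
  - apply Rmin_pos; [lra|]. apply Rdiv_lt_0_compat; lra.
  - intros h Hh0 Hh.
    assert (Hsmall : Cnorm h * (K + 1) <= eps) by nra.
    eapply Rle_trans; [apply Hrem; lra|]. nra.
Qed.

(* Derivatives are unique: test the two difference quotients along a small real h. *)
Lemma Cderiv_unique (f : CC -> CC) (z l1 l2 : CC) :
  Cderiv_at f z l1 -> Cderiv_at f z l2 -> l1 = l2.
Proof.
  intros H1 H2. apply NNPP; intro Hne. apply Csub_neq0, Cnorm_pos in Hne.
  set (e := Cnorm (Csub l1 l2) / 4). assert (He : 0 < e) by (unfold e; lra).
  destruct (H1 e He) as [d1 [Hd1 P1]], (H2 e He) as [d2 [Hd2 P2]].
  set (t := Rmin d1 d2 / 2). pose proof (Rmin_pos d1 d2 Hd1 Hd2).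
  pose proof (Rmin_l d1 d2). pose proof (Rmin_r d1 d2).
  assert (Ht : Cnorm (Cof t) = t) by (rewrite Cnorm_Cof; apply Rabs_right; unfold t; lra).
  specialize (P1 (Cof t) ltac:(unfold t in *; lra) ltac:(unfold t in *; lra)).
  specialize (P2 (Cof t) ltac:(unfold t in *; lra) ltac:(unfold t in *; lra)).
  set (q := Csub (f (Cadd z (Cof t))) (f z)) in *.
  assert (E : Cmul (Csub l1 l2) (Cof t) = Csub (Csub q (Cmul l2 (Cof t))) (Csub q (Cmul l1 (Cof t))))
    by CC_ring.
  pose proof (Cnorm_sub (Csub q (Cmul l2 (Cof t))) (Csub q (Cmul l1 (Cof t)))) as Hs.
  rewrite <- E, Cnorm_mul in Hs. rewrite Ht in *.
  assert (0 < Cnorm (Csub l1 l2) * t) by (apply Rmult_lt_0_compat; unfold t; lra).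
  unfold e in *. nra.
Qed.

(** Derivative towers.  A tower [F] is meant to list a function together with
    its successive derivatives, [F s] being the [s]-th one. *)

Definition tower : Type := nat -> CC -> CC.

Definition taylor_rem (F : tower) (s : nat) (z h : CC) : CC :=
  Csub (Csub (F s (Cadd z h)) (F s z)) (Cmul (F (S s) z) h).

Definition eventually_zero (F : tower) : Prop :=
  exists N, forall s z, (N <= s)%nat -> F s z = C0.

Definition tower_bound (F : tower) (r K : R) : Prop :=
  forall s z h, Cnorm z <= r -> Cnorm h <= 1 ->
    Cnorm (F s z) <= K /\ Cnorm (taylor_rem F s z h) <= K * (Cnorm h * Cnorm h).

(* Tame towers: the derivative towers of polynomials are the motivating example. *)
Definition tame (F : tower) : Prop :=
  eventually_zero F /\ forall r, exists K, 0 <= K /\ tower_bound F r K.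

Lemma tame_deriv (F : tower) (s : nat) (z : CC) : tame F -> Cderiv_at (F s) z (F (S s) z).
Proof.
  intros [_ HF]. destruct (HF (Cnorm z)) as [K [HK HB]].
  apply (Cderiv_of_quadratic_remainder _ _ _ K HK).
  intros h Hh. apply (HB s z h); lra.
Qed.

Lemma tower_bound_increment (F : tower) (r K : R) (s : nat) (z h : CC) :
  tower_bound F r K -> Cnorm z <= r -> Cnorm h <= 1 ->
  Cnorm (Csub (F s (Cadd z h)) (F s z)) <= 2 * K * Cnorm h.
Proof.
  intros HB Hz Hh. destruct (HB s z h Hz Hh) as [_ Hrem], (HB (S s) z h Hz Hh) as [Hder _].
  pose proof (Cnorm_nonneg h).
  assert (HK : 0 <= K) by (pose proof (Cnorm_nonneg (F (S s) z)); lra).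
  assert (Cnorm h * Cnorm h <= Cnorm h) by nra.
  replace (Csub (F s (Cadd z h)) (F s z)) with (Cadd (taylor_rem F s z h) (Cmul (F (S s) z) h))
    by (unfold taylor_rem; CC_ring).
  eapply Rle_trans; [apply Cnorm_triangle|]. rewrite Cnorm_mul.
  assert (Cnorm (F (S s) z) * Cnorm h <= K * Cnorm h) by (apply Rmult_le_compat_r; auto).
  nra.
Qed.

Definition tower_scale (c : CC) (F : tower) : tower := fun s z => Cmul c (F s z).

Lemma tower_bound_scale (c : CC) (F : tower) (r K : R) :
  tower_bound F r K -> tower_bound (tower_scale c F) r (Cnorm c * K).
Proof.
  intros HB s z h Hz Hh. destruct (HB s z h Hz Hh) as [Hval Hrem].
  pose proof (Cnorm_nonneg c). unfold tower_scale.
  replace (taylor_rem (fun s z => Cmul c (F s z)) s z h) with (Cmul c (taylor_rem F s z h))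
    by (unfold taylor_rem; CC_ring).
  rewrite !Cnorm_mul, Rmult_assoc. split; apply Rmult_le_compat_l; auto.
Qed.

Lemma tower_bound_weaken (F : tower) (r r' K K' : R) :
  tower_bound F r K -> r' <= r -> K <= K' -> tower_bound F r' K'.
Proof.
  intros HB HR HK s z h Hz Hh. destruct (HB s z h ltac:(lra) Hh) as [Hval Hrem].
  pose proof (Cnorm_nonneg h). split; [lra|].
  assert (K * (Cnorm h * Cnorm h) <= K' * (Cnorm h * Cnorm h)) by (apply Rmult_le_compat_r; nra).
  lra.
Qed.

Definition tower_zero : tower := fun _ _ => C0.

Definition tower_addC (c : CC) (F : tower) : tower :=
  fun s z => match s with O => Cadd c (F O z) | _ => F s z end.

Definition tower_const (c : CC) : tower := tower_addC c tower_zero.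

(* Leibniz rule: the s-th derivative of (z - b) f is s f^(s-1) + (z - b) f^(s). *)
Definition tower_mul_lin (b : CC) (F : tower) : tower := fun s z =>
  Cadd (Cmul (Cof (INR s)) (F (pred s) z)) (Cmul (Csub z b) (F s z)).

Lemma tame_zero : tame tower_zero.
Proof.
  split; [exists 0%nat; reflexivity|].
  intros r. exists 0. split; [lra|]. intros s z h _ _. unfold taylor_rem, tower_zero.
  replace (Csub (Csub C0 C0) (Cmul C0 h)) with C0 by CC_ring.
  rewrite Cnorm_C0. nra.
Qed.

Lemma tame_addC (c : CC) (F : tower) : tame F -> tame (tower_addC c F).
Proof.
  intros [[N HN] HF]. split.
  - exists (S N). intros [|s] z Hs; [lia|]. apply HN; lia.
  - intros r. destruct (HF r) as [K [HK HB]]. exists (Cnorm c + K).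
    pose proof (Cnorm_nonneg c). split; [lra|]. intros s z h Hz Hh.
    destruct (HB s z h Hz Hh) as [Hval Hrem]. pose proof (Cnorm_nonneg h).
    unfold taylor_rem, tower_addC in *. destruct s as [|s].
    + split; [eapply Rle_trans; [apply Cnorm_triangle|]; lra|].
      replace (Csub (Csub (Cadd c (F 0%nat (Cadd z h))) (Cadd c (F 0%nat z))) (Cmul (F 1%nat z) h))
        with (Csub (Csub (F 0%nat (Cadd z h)) (F 0%nat z)) (Cmul (F 1%nat z) h)) by CC_ring.
      nra.
    + split; nra.
Qed.

Lemma tame_const (c : CC) : tame (tower_const c).
Proof. apply tame_addC, tame_zero. Qed.

Lemma taylor_rem_mul_lin (b : CC) (F : tower) (s : nat) (z h : CC) :
  taylor_rem (tower_mul_lin b F) s z h =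
  Cadd (Cadd (Cmul (Cof (INR s)) (taylor_rem F (pred s) z h))
             (Cmul (Csub z b) (taylor_rem F s z h)))
       (Cmul h (Csub (F s (Cadd z h)) (F s z))).
Proof.
  unfold taylor_rem, tower_mul_lin. rewrite S_INR.
  destruct s as [|s]; simpl pred; [change (INR 0) with 0|]; CC_ring.
Qed.

Lemma index_weight_bound (N : nat) (a : nat -> CC) (B : R) (s : nat) :
  0 <= B -> (forall n, (N <= n)%nat -> a n = C0) -> (forall n, Cnorm (a n) <= B) ->
  Cnorm (Cmul (Cof (INR s)) (a (pred s))) <= INR N * B.
Proof.
  intros HB Hzero Ha. rewrite Cnorm_mul, Cnorm_Cof, Rabs_right by (apply Rle_ge, pos_INR).
  destruct (le_lt_dec s N) as [Hs|Hs].
  - apply Rmult_le_compat; auto using pos_INR, Cnorm_nonneg, le_INR.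
  - rewrite Hzero, Cnorm_C0 by lia. pose proof (pos_INR N). nra.
Qed.

Lemma tower_bound_mul_lin (b : CC) (F : tower) (N : nat) (r K : R) :
  (forall s z, (N <= s)%nat -> F s z = C0) -> 0 <= r -> 0 <= K -> tower_bound F r K ->
  tower_bound (tower_mul_lin b F) r ((INR N + r + Cnorm b + 3) * K).
Proof.
  intros HN Hr HK HB s z h Hz Hh.
  pose proof (pos_INR N). pose proof (Cnorm_nonneg b). pose proof (Cnorm_nonneg h).
  destruct (HB s z h Hz Hh) as [Hval Hrem].
  assert (Hzb : Cnorm (Csub z b) <= r + Cnorm b) by (pose proof (Cnorm_sub z b); lra).
  split.
  - assert (Hshift : Cnorm (Cmul (Cof (INR s)) (F (pred s) z)) <= INR N * K).
    { apply (index_weight_bound N (fun n => F n z)); auto.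
      intro n. exact (proj1 (HB n z h Hz Hh)). }
    assert (Hlin : Cnorm (Csub z b) * Cnorm (F s z) <= (r + Cnorm b) * K)
      by (apply Rmult_le_compat; auto using Cnorm_nonneg).
    unfold tower_mul_lin. eapply Rle_trans; [apply Cnorm_triangle|].
    rewrite (Cnorm_mul (Csub z b)). nra.
  - assert (Hshift : Cnorm (Cmul (Cof (INR s)) (taylor_rem F (pred s) z h))
                     <= INR N * (K * (Cnorm h * Cnorm h))).
    { apply (index_weight_bound N (fun n => taylor_rem F n z h)); [nra| |].
      - intros n Hn. unfold taylor_rem. rewrite !HN by lia. CC_ring.
      - intro n. exact (proj2 (HB n z h Hz Hh)). }
    assert (Hlin : Cnorm (Csub z b) * Cnorm (taylor_rem F s z h)
                   <= (r + Cnorm b) * (K * (Cnorm h * Cnorm h)))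
      by (apply Rmult_le_compat; auto using Cnorm_nonneg).
    assert (Hinc : Cnorm h * Cnorm (Csub (F s (Cadd z h)) (F s z)) <= Cnorm h * (2 * K * Cnorm h))
      by (apply Rmult_le_compat_l; auto; apply (tower_bound_increment F r); auto).
    rewrite taylor_rem_mul_lin.
    eapply Rle_trans; [apply Cnorm_triangle|]. rewrite (Cnorm_mul h).
    eapply Rle_trans; [apply Rplus_le_compat_r, Cnorm_triangle|].
    rewrite (Cnorm_mul (Csub z b)). nra.
Qed.

Lemma tame_mul_lin (b : CC) (F : tower) : tame F -> tame (tower_mul_lin b F).
Proof.
  intros [[N HN] HF]. split.
  - exists (S N). intros s z Hs. unfold tower_mul_lin.
    rewrite (HN (pred s)), (HN s) by lia. CC_ring.
  - intros r. destruct (Rle_lt_dec 0 r) as [Hr|Hr].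
    + destruct (HF r) as [K [HK HB]]. exists ((INR N + r + Cnorm b + 3) * K).
      pose proof (pos_INR N). pose proof (Cnorm_nonneg b).
      split; [nra|]. apply tower_bound_mul_lin; auto.
    + exists 0. split; [lra|]. intros s z h Hz. pose proof (Cnorm_nonneg z). lra.
Qed.

(** Polynomials: [tower_poly cs] is the derivative tower of the polynomial
    with coefficient list [cs], obtained by the Horner scheme. *)

Fixpoint tower_poly (cs : list CC) : tower :=
  match cs with
  | nil => tower_zero
  | c :: cs' => tower_addC c (tower_mul_lin C0 (tower_poly cs'))
  end.

Lemma tame_poly (cs : list CC) : tame (tower_poly cs).
Proof. induction cs; simpl; auto using tame_zero, tame_addC, tame_mul_lin. Qed.

Lemma tower_poly_eval (cs : list CC) (z : CC) : tower_poly cs O z = Cpoly_eval cs z.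
Proof.
  induction cs as [|c cs IH]; [reflexivity|].
  simpl. unfold tower_addC, tower_mul_lin. rewrite IH. simpl. CC_ring.
Qed.

Definition vanishes_to (b : CC) (k : nat) (F : tower) : Prop :=
  forall s, (s < k)%nat -> F s b = C0.

Lemma vanishes_to_mul_lin (g b : CC) (k : nat) (F : tower) :
  vanishes_to b k F -> vanishes_to b k (tower_mul_lin g F).
Proof. intros H s Hs. unfold tower_mul_lin. rewrite (H (pred s)), (H s) by lia. CC_ring. Qed.

Lemma vanishes_to_mul_lin_same (b : CC) (k : nat) (F : tower) :
  vanishes_to b k F -> vanishes_to b (S k) (tower_mul_lin b F).
Proof.
  intros H [|s] Hs; unfold tower_mul_lin.
  - change (INR 0) with 0. CC_ring.
  - rewrite (H (pred (S s))) by (simpl; lia). CC_ring.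
Qed.

Definition tower_mul_pow (b : CC) (k : nat) (F : tower) : tower :=
  Nat.iter k (tower_mul_lin b) F.

Lemma tame_mul_pow (b : CC) (k : nat) (F : tower) : tame F -> tame (tower_mul_pow b k F).
Proof. intros H; induction k; [exact H|]. apply tame_mul_lin, IHk. Qed.

Lemma vanishes_to_mul_pow_same (b : CC) (k : nat) (F : tower) :
  vanishes_to b k (tower_mul_pow b k F).
Proof.
  induction k; [intros s Hs; lia|]. apply vanishes_to_mul_lin_same, IHk.
Qed.

Lemma vanishes_to_mul_pow (g b : CC) (j k : nat) (F : tower) :
  vanishes_to b k F -> vanishes_to b k (tower_mul_pow g j F).
Proof. intros H; induction j; [exact H|]. apply vanishes_to_mul_lin, IHj. Qed.

Lemma tower_mul_pow_top (b : CC) (k : nat) (F : tower) :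
  tower_mul_pow b k F k b = Cmul (Cof (INR (fact k))) (F O b).
Proof.
  induction k; [simpl; CC_ring|].
  change (tower_mul_pow b (S k) F) with (tower_mul_lin b (tower_mul_pow b k F)).
  unfold tower_mul_lin. simpl pred. rewrite IHk, fact_simpl, mult_INR. CC_ring.
Qed.

Lemma tower_mul_pow_neq0 (g b : CC) (j : nat) (F : tower) :
  b <> g -> F O b <> C0 -> tower_mul_pow g j F O b <> C0.
Proof.
  intros Hbg HF. induction j; [exact HF|].
  change (tower_mul_pow g (S j) F) with (tower_mul_lin g (tower_mul_pow g j F)).
  unfold tower_mul_lin.
  replace (Cadd (Cmul (Cof (INR 0)) (tower_mul_pow g j F (pred 0) b))
                (Cmul (Csub b g) (tower_mul_pow g j F 0%nat b)))
    with (Cmul (Csub b g) (tower_mul_pow g j F 0%nat b))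
    by (change (INR 0) with 0; CC_ring).
  apply Cmul_neq0; auto using Csub_neq0.
Qed.

(** Interpolating polynomials along a sequence of nodes [nd]. *)

Section Interpolation.
Variable nd : nat -> CC.

Fixpoint occurrences (a : CC) (n : nat) : nat :=
  match n with
  | O => O
  | S k => (occurrences a k + if CC_eq_dec (nd k) a then 1 else 0)%nat
  end.

Definition node_order (m : nat) : nat := occurrences (nd m) m.

Lemma occurrences_le (a : CC) (n : nat) : (occurrences a n <= n)%nat.
Proof. induction n; simpl; [lia|]. destruct (CC_eq_dec (nd n) a); lia. Qed.

Lemma occurrences_mono (a : CC) (n m : nat) : (n <= m)%nat -> (occurrences a n <= occurrences a m)%nat.
Proof. induction 1; simpl; lia. Qed.

Fixpoint other_factors (m j : nat) : tower :=
  match j with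
  | O => tower_const Defs.C1
  | S l => if CC_eq_dec (nd l) (nd m) then other_factors m l
           else tower_mul_pow (nd l) m (other_factors m l)
  end.

Definition interp (m : nat) : tower :=
  tower_mul_pow (nd m) (node_order m) (other_factors m m).

Lemma tame_other_factors (m j : nat) : tame (other_factors m j).
Proof.
  induction j; simpl; [apply tame_const|].
  destruct (CC_eq_dec (nd j) (nd m)); auto using tame_mul_pow.
Qed.

Lemma tame_interp (m : nat) : tame (interp m).
Proof. apply tame_mul_pow, tame_other_factors. Qed.

Lemma other_factors_vanish (m j l : nat) :
  (l < j)%nat -> nd l <> nd m -> vanishes_to (nd l) m (other_factors m j).
Proof.
  induction j as [|j IH]; intros Hl Hne; [lia|]. simpl.
  destruct (CC_eq_dec (nd j) (nd m)) as [E|E].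
  - apply IH; [|exact Hne]. assert (l <> j) by (intros ->; contradiction). lia.
  - destruct (Nat.eq_dec l j) as [->|Hlj].
    + apply vanishes_to_mul_pow_same.
    + apply vanishes_to_mul_pow, IH; [lia|exact Hne].
Qed.

Lemma other_factors_neq0 (m j : nat) : other_factors m j O (nd m) <> C0.
Proof.
  induction j; simpl.
  - unfold tower_const, tower_addC, tower_zero, Cadd, Defs.C1, C0. intro E; injection E; lra.
  - destruct (CC_eq_dec (nd j) (nd m)); auto using tower_mul_pow_neq0.
Qed.

Lemma interp_vanishes (m l : nat) : (l < m)%nat -> interp m (node_order l) (nd l) = C0.
Proof.
  intros Hl. unfold interp. destruct (CC_eq_dec (nd l) (nd m)) as [E|E].
  - rewrite E. apply vanishes_to_mul_pow_same. unfold node_order. rewrite <- E.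
    pose proof (occurrences_mono (nd l) (S l) m ltac:(lia)) as Hmono. simpl in Hmono.
    destruct (CC_eq_dec (nd l) (nd l)); [lia|congruence].
  - apply (vanishes_to_mul_pow (nd m) (nd l) (node_order m) m).
    + apply other_factors_vanish; auto.
    + unfold node_order. pose proof (occurrences_le (nd l) l). lia.
Qed.

Lemma interp_own_order_neq0 (m : nat) : interp m (node_order m) (nd m) <> C0.
Proof.
  unfold interp. rewrite tower_mul_pow_top. apply Cmul_neq0; [|apply other_factors_neq0].
  intro E. injection E as E. apply (fact_neq_0 (node_order m)), INR_eq. simpl. lra.
Qed.

Lemma occurrences_hit (a : CC) (n s : nat) :
  (s < occurrences a n)%nat -> exists m, nd m = a /\ occurrences a m = s.
Proof.
  induction n; simpl; intros Hs; [lia|].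
  destruct (CC_eq_dec (nd n) a) as [E|E].
  - destruct (Nat.eq_dec s (occurrences a n)) as [->|Hne]; [exists n; auto|].
    apply IHn. lia.
  - apply IHn. lia.
Qed.

Lemma every_order_assigned (a : CC) :
  (forall N, exists m, (N <= m)%nat /\ nd m = a) ->
  forall s, exists m, nd m = a /\ node_order m = s.
Proof.
  intros Hinf s.
  assert (Hunb : exists n, (s < occurrences a n)%nat).
  { induction s as [|s [n Hn]].
    - destruct (Hinf O) as [m [_ Hm]]. exists (S m). simpl.
      destruct (CC_eq_dec (nd m) a); [lia|congruence].
    - destruct (Hinf n) as [m [Hm1 Hm2]]. exists (S m). simpl.
      destruct (CC_eq_dec (nd m) a); [|congruence].
      pose proof (occurrences_mono a n m Hm1). lia. }
  destruct Hunb as [n Hn]. destruct (occurrences_hit a n s Hn) as [m [H1 H2]].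
  exists m. unfold node_order. rewrite H1. auto.
Qed.
End Interpolation.

(** The algebraic numbers can be listed in a sequence. *)

Definition nonzero_poly (p : list CC) : Prop := exists c, In c p /\ c <> C0.

(* Synthetic division: p(z) = (z - a) q(z) + r, with q one coefficient shorter. *)
Fixpoint divide_lin (a : CC) (p : list CC) : list CC * CC :=
  match p with
  | nil => (nil, C0)
  | c :: nil => (nil, c)
  | c :: p' => let (q, r) := divide_lin a p' in (r :: q, Cadd c (Cmul a r))
  end.

Lemma divide_lin_spec (a : CC) (p : list CC) :
  let (q, r) := divide_lin a p in
  length q = pred (length p) /\
  (forall z, Cpoly_eval p z = Cadd (Cmul (Csub z a) (Cpoly_eval q z)) r) /\
  (nonzero_poly p -> nonzero_poly q \/ r <> C0).
Proof.
  induction p as [|c [|d p] IH].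
  - split; [reflexivity|]. split; [intro; simpl; CC_ring|]. intros [c [[] _]].
  - split; [reflexivity|]. split; [intro; simpl; CC_ring|].
    intros [c' [[<-|[]] Hc]]. right; exact Hc.
  - change (divide_lin a (c :: d :: p))
      with (let (q, r) := divide_lin a (d :: p) in (r :: q, Cadd c (Cmul a r))).
    destruct (divide_lin a (d :: p)) as [q r]. destruct IH as [Hlen [Heval Hnz]].
    split; [simpl in *; lia|]. split.
    + intro z. change (Cpoly_eval (c :: d :: p) z) with (Cadd c (Cmul z (Cpoly_eval (d :: p) z))).
      rewrite Heval. simpl. CC_ring.
    + intros [e [He Hne]].
      destruct (classic (r = C0)) as [Hr|Hr]; [|left; exists r; simpl; auto].
      destruct He as [<-|He].
      * right. rewrite Hr. intro E. apply Hne. rewrite <- E. CC_ring.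
      * destruct Hnz as [[e' [He' Hne']]|]; [exists e; split; auto| |contradiction].
        left. exists e'. simpl; auto.
Qed.

Lemma roots_finite (n : nat) (p : list CC) : (length p <= n)%nat -> nonzero_poly p ->
  exists L, forall z, Cpoly_eval p z = C0 -> In z L.
Proof.
  revert p; induction n as [|n IH]; intros p Hlen Hnz.
  - destruct p; [destruct Hnz as [c [[] _]]|simpl in Hlen; lia].
  - destruct (classic (exists a, Cpoly_eval p a = C0)) as [[a Ha]|Hnone].
    2:{ exists nil. intros z Hz. apply Hnone. eauto. }
    pose proof (divide_lin_spec a p) as Hdiv.
    destruct (divide_lin a p) as [q r]. destruct Hdiv as [Hqlen [Heval Hqnz]].
    assert (Hr : r = C0) by (rewrite Heval in Ha; rewrite <- Ha; unfold Csub; CC_ring).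
    destruct (Hqnz Hnz) as [Hq|]; [|contradiction].
    destruct (IH q ltac:(lia) Hq) as [L HL].
    exists (a :: L). intros z Hz. rewrite Heval, Hr in Hz.
    destruct (CC_eq_dec z a) as [->|Hza]; [left; reflexivity|right].
    apply HL. apply NNPP. intro Hqz. apply (Cmul_neq0 (Csub z a) (Cpoly_eval q z)); auto.
    - apply Csub_neq0; exact Hza.
    - rewrite <- Hz. CC_ring.
Qed.

Lemma roots_list_ex (p : list CC) :
  exists L, nonzero_poly p -> forall z, Cpoly_eval p z = C0 -> In z L.
Proof.
  destruct (classic (nonzero_poly p)) as [H|H].
  - destruct (roots_finite (length p) p (le_n _) H) as [L HL]. exists L; auto.
  - exists nil; intros; contradiction.
Qed.

(* A list containing all roots of [p] (when p is not the zero polynomial). *)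
Definition roots_list (p : list CC) : list CC :=
  proj1_sig (constructive_indefinite_description _ (roots_list_ex p)).

Lemma roots_list_spec (p : list CC) (z : CC) :
  nonzero_poly p -> Cpoly_eval p z = C0 -> In z (roots_list p).
Proof. unfold roots_list. destruct (constructive_indefinite_description _ _). simpl. auto. Qed.

Definition int_range (H : nat) : list Z :=
  map (fun k => (Z.of_nat k - Z.of_nat H)%Z) (seq 0 (2 * H + 1)).

Fixpoint int_lists (H n : nat) : list (list Z) :=
  match n with
  | O => nil :: nil
  | S k => flat_map (fun c => map (cons c) (int_lists H k)) (int_range H)
  end.

Lemma int_lists_complete (H : nat) (cs : list Z) :
  Forall (fun c => (Z.abs c <= Z.of_nat H)%Z) cs -> In cs (int_lists H (length cs)).
Proof.
  induction cs as [|c cs IH]; intros Hb; [simpl; auto|].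
  inversion Hb as [|? ? Hc Hcs]; subst. simpl. apply in_flat_map. exists c. split.
  - apply in_map_iff. exists (Z.to_nat (c + Z.of_nat H)). split; [lia|]. apply in_seq. lia.
  - apply in_map, IH, Hcs.
Qed.

Definition roots_of_height (H : nat) : list CC :=
  flat_map (fun cs => roots_list (map (fun c => Cof (IZR c)) cs))
           (flat_map (int_lists H) (seq 0 (S H))).

Lemma int_list_height (cs : list Z) :
  exists H, (length cs <= H)%nat /\ Forall (fun c => (Z.abs c <= Z.of_nat H)%Z) cs.
Proof.
  induction cs as [|c cs [H [Hlen Hb]]]; [exists O; simpl; auto|].
  exists (S H + Z.to_nat (Z.abs c))%nat. split; [simpl; lia|]. constructor; [lia|].
  eapply Forall_impl; [|exact Hb]. simpl. intros x Hx. lia.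
Qed.

Lemma algebraic_of_some_height (z : CC) : algebraic z -> exists H, In z (roots_of_height H).
Proof.
  intros [cs [[c [Hc Hc0]] Hz]]. destruct (int_list_height cs) as [H [Hlen Hb]].
  exists H. apply in_flat_map. exists cs. split.
  - apply in_flat_map. exists (length cs). split; [apply in_seq; lia|].
    apply int_lists_complete, Hb.
  - apply roots_list_spec; [|exact Hz]. exists (Cof (IZR c)). split.
    + apply (in_map (fun c => Cof (IZR c))), Hc.
    + intro E. injection E as E. apply Hc0, eq_IZR, E.
Qed.

Definition alg_enum (n : nat) : CC :=
  let (H, k) := Cantor.of_nat n in nth k (roots_of_height H) C0.

Lemma alg_enum_surj (z : CC) : algebraic z -> exists n, alg_enum n = z.
Proof.
  intros Hz. destruct (algebraic_of_some_height z Hz) as [H Hin].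
  destruct (In_nth _ _ C0 Hin) as [k [_ Hk]].
  exists (Cantor.to_nat (H, k)). unfold alg_enum. rewrite Cantor.cancel_of_to. exact Hk.
Qed.

(* The node sequence of the construction: it repeats every algebraic number
   infinitely often, so that every derivative order gets its turn. *)
Definition node (m : nat) : CC := alg_enum (fst (Cantor.of_nat m)).

Lemma node_recurs (z : CC) : algebraic z -> forall N, exists m, (N <= m)%nat /\ node m = z.
Proof.
  intros Hz N. destruct (alg_enum_surj z Hz) as [n Hn].
  exists (Cantor.to_nat (n, N)). split.
  - pose proof (Cantor.to_nat_non_decreasing n N). lia.
  - unfold node. rewrite Cantor.cancel_of_to. exact Hn.
Qed.

(* Q is dense in R: with M > 1/d, take the fraction up(x M) / M. *)
Lemma Q_between (x d : R) : 0 < d -> exists p : Q, x < Q2R p < x + d.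
Proof.
  intros Hd. destruct (archimed (/ d)) as [HM _]. set (M := up (/ d)) in *.
  assert (HM0 : (0 < M)%Z) by (apply lt_IZR; pose proof (Rinv_0_lt_compat d Hd); simpl; lra).
  assert (HMpos : 0 < IZR M) by (apply IZR_lt; lia).
  assert (HdM : 1 < d * IZR M).
  { apply (Rmult_lt_compat_l d) in HM; auto. rewrite Rinv_r in HM by lra. lra. }
  destruct (archimed (x * IZR M)) as [Hu1 Hu2]. set (u := up (x * IZR M)) in *.
  exists (Qmake u (Z.to_pos M)). unfold Q2R. simpl. rewrite Z2Pos.id by lia.
  split; apply (Rmult_lt_reg_r (IZR M)); auto; rewrite Rmult_assoc, Rinv_l by lra; nra.
Qed.

Lemma Q_approx_nonzero (x d : R) : 0 < d -> exists p : Q, Rabs (Q2R p - x) < d /\ Q2R p <> 0.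
Proof.
  intros Hd. destruct (Rle_lt_dec 0 x) as [Hx|Hx].
  - destruct (Q_between x d Hd) as [p Hp]. exists p. rewrite Rabs_right; lra.
  - pose proof (Rmin_l d (- x)). pose proof (Rmin_r d (- x)).
    destruct (Q_between x (Rmin d (- x)) ltac:(apply Rmin_pos; lra)) as [p Hp].
    exists p. rewrite Rabs_right; lra.
Qed.

(* Moving c by a small multiple of d lands in Q(i) \ {0}: the inductive step
   of the construction. *)
Lemma Qi_correction (c d : CC) (eta : R) : d <> C0 -> 0 < eta ->
  exists x, Cnorm x <= eta /\ in_Qi (Cadd c (Cmul x d)) /\ Cadd c (Cmul x d) <> C0.
Proof.
  intros Hd Heta. pose proof (Cnorm_pos d Hd) as Hnd.
  set (delta := eta * Cnorm d / 2). assert (Hdelta : 0 < delta) by (unfold delta; nra).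
  destruct (Q_approx_nonzero (fst c) delta Hdelta) as [p1 [Hp1 Hp1nz]].
  destruct (Q_approx_nonzero (snd c) delta Hdelta) as [p2 [Hp2 _]].
  set (q := (Q2R p1, Q2R p2) : CC).
  set (x := Cmul (Csub q c) (Complex.Cinv d)).
  assert (Hxd : Cmul x d = Csub q c).
  { assert (Hinv : Cmul (Complex.Cinv d) d = Defs.C1) by exact (Complex.Cinv_l d Hd).
    unfold x. transitivity (Cmul (Csub q c) (Cmul (Complex.Cinv d) d)); [CC_ring|].
    rewrite Hinv. CC_ring. }
  exists x. split; [|split].
  - assert (Hqc : Cnorm (Csub q c) < 2 * delta).
    { eapply Rle_lt_trans; [apply Cnorm_le_parts|]. unfold q. simpl. unfold Rminus in *. lra. }
    assert (Hxd_small : Cnorm x * Cnorm d < eta * Cnorm d)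
      by (rewrite <- Cnorm_mul, Hxd; unfold delta in Hqc; lra).
    apply Rmult_lt_reg_r in Hxd_small; auto. lra.
  - rewrite Hxd. exists p1, p2. unfold q. CC_ring.
  - rewrite Hxd. replace (Cadd c (Csub q c)) with q by CC_ring.
    intro E. apply Hp1nz. exact (f_equal fst E).
Qed.

(** Complex series dominated by a geometric sequence. *)

Definition weight (n : nat) : R := (/ 2) ^ n.

Lemma weight_pos (n : nat) : 0 < weight n.
Proof. apply pow_lt. lra. Qed.

Lemma ex_series_weight (C : R) : ex_series (fun n => C * weight n).
Proof.
  apply (ex_series_scal_l C (fun n => weight n)), ex_series_geom. rewrite Rabs_right; lra.
Qed.

Lemma Series_weight (C : R) : Series (fun n => C * weight n) = 2 * C.
Proof.
  rewrite Series_scal_l. unfold weight. rewrite Series_geom by (rewrite Rabs_right; lra).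
  field.
Qed.

Lemma Series_weighted (a : nat -> R) (C : R) :
  (forall n, Rabs (a n) <= C * weight n) -> ex_series a /\ Rabs (Series a) <= 2 * C.
Proof.
  intros Ha. assert (Habs : ex_series (fun n => Rabs (a n))).
  { apply (@ex_series_le R_AbsRing R_CompleteNormedModule _ (fun n => C * weight n));
      [|apply ex_series_weight].
    intro n. change (Rabs (Rabs (a n)) <= C * weight n). rewrite Rabs_Rabsolu. apply Ha. }
  split; [apply ex_series_Rabs, Habs|].
  eapply Rle_trans; [apply Series_Rabs, Habs|]. rewrite <- Series_weight.
  apply Series_le; [|apply ex_series_weight]. intro n. split; [apply Rabs_pos|apply Ha].
Qed.

Definition dominated (a : nat -> CC) (C : R) : Prop := forall n, Cnorm (a n) <= C * weight n.

Definition CSeries (a : nat -> CC) : CC := (Series (fun n => fst (a n)), Series (fun n => snd (a n))).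

Lemma dominated_parts (a : nat -> CC) (C : R) : dominated a C ->
  (ex_series (fun n => fst (a n)) /\ Rabs (Series (fun n => fst (a n))) <= 2 * C) /\
  (ex_series (fun n => snd (a n)) /\ Rabs (Series (fun n => snd (a n))) <= 2 * C).
Proof.
  intros Ha. split; apply Series_weighted; intro n; eapply Rle_trans;
    [apply Cnorm_fst|apply Ha|apply Cnorm_snd|apply Ha].
Qed.

Lemma dominated_add (a b : nat -> CC) (Ca Cb : R) :
  dominated a Ca -> dominated b Cb -> dominated (fun n => Cadd (a n) (b n)) (Ca + Cb).
Proof.
  intros Ha Hb n. eapply Rle_trans; [apply Cnorm_triangle|].
  specialize (Ha n); specialize (Hb n). lra.
Qed.

Lemma dominated_scal (c : CC) (b : nat -> CC) (Cb : R) :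
  dominated b Cb -> dominated (fun n => Cmul c (b n)) (Cnorm c * Cb).
Proof.
  intros Hb n. rewrite Cnorm_mul, Rmult_assoc.
  apply Rmult_le_compat_l; [apply Cnorm_nonneg|apply Hb].
Qed.

Lemma CSeries_add (a b : nat -> CC) (Ca Cb : R) : dominated a Ca -> dominated b Cb ->
  CSeries (fun n => Cadd (a n) (b n)) = Cadd (CSeries a) (CSeries b).
Proof.
  intros Ha Hb. destruct (dominated_parts a Ca Ha) as [[Ha1 _] [Ha2 _]].
  destruct (dominated_parts b Cb Hb) as [[Hb1 _] [Hb2 _]].
  apply CC_ext; simpl; apply Series_plus; assumption.
Qed.

Lemma ex_series_Rmult (c : R) (a : nat -> R) : ex_series a -> ex_series (fun n => c * a n).
Proof. intros H. exact (ex_series_scal_l c a H). Qed.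

Lemma CSeries_scal (c : CC) (b : nat -> CC) (Cb : R) : dominated b Cb ->
  CSeries (fun n => Cmul c (b n)) = Cmul c (CSeries b).
Proof.
  intros Hb. destruct (dominated_parts b Cb Hb) as [[Hb1 _] [Hb2 _]].
  apply CC_ext; simpl.
  - rewrite <- !Series_scal_l, <- Series_minus by (apply ex_series_Rmult; assumption).
    reflexivity.
  - rewrite <- !Series_scal_l, <- Series_plus by (apply ex_series_Rmult; assumption).
    reflexivity.
Qed.

(* |sum a| <= |Re sum a| + |Im sum a| <= 4C. *)
Lemma CSeries_bound (a : nat -> CC) (C : R) : dominated a C -> Cnorm (CSeries a) <= 4 * C.
Proof.
  intros Ha. destruct (dominated_parts a C Ha) as [[_ H1] [_ H2]].
  eapply Rle_trans; [apply Cnorm_le_parts|]. simpl. lra.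
Qed.

Fixpoint Csum (f : nat -> CC) (n : nat) : CC :=
  match n with O => C0 | S k => Cadd (Csum f k) (f k) end.

Lemma Csum_ext (f g : nat -> CC) (n : nat) :
  (forall l, (l < n)%nat -> f l = g l) -> Csum f n = Csum g n.
Proof.
  induction n; intros H; simpl; [reflexivity|].
  rewrite IHn, H; [reflexivity|lia|]. intros l Hl. apply H. lia.
Qed.

Lemma Series_finite (a : nat -> R) (m : nat) : (forall n, (m < n)%nat -> a n = 0) ->
  Series a = sum_f_R0 a m.
Proof.
  intros Ha. apply is_series_unique, is_series_Reals. intros e He. exists m. intros n Hn.
  assert (Hsum : sum_f_R0 a n = sum_f_R0 a m).
  { induction Hn as [|n Hn IH]; [reflexivity|]. simpl. rewrite IH, (Ha (S n)) by lia. ring. }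
  unfold Rdist. rewrite Hsum, Rminus_diag, Rabs_R0. exact He.
Qed.

Lemma CSeries_finite (a : nat -> CC) (m : nat) : (forall n, (m < n)%nat -> a n = C0) ->
  CSeries a = Csum a (S m).
Proof.
  intros Ha. assert (Hparts : forall n, Csum a (S n) =
    (sum_f_R0 (fun k => fst (a k)) n, sum_f_R0 (fun k => snd (a k)) n)).
  { induction n; [simpl; apply CC_ext; simpl; ring|].
    change (Csum a (S (S n))) with (Cadd (Csum a (S n)) (a (S n))). rewrite IHn. reflexivity. }
  rewrite Hparts. unfold CSeries. f_equal; apply Series_finite; intros n Hn; rewrite Ha; auto.
Qed.

Lemma tower_series_deriv (T : nat -> tower) (r C : R) (s : nat) (z : CC) :
  Cnorm z + 1 <= r -> (forall n, tower_bound (T n) r (C * weight n)) ->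
  Cderiv_at (fun x => CSeries (fun n => T n s x)) z (CSeries (fun n => T n (S s) z)).
Proof.
  intros Hr HT. pose proof (Cnorm_nonneg z).
  assert (Hval : forall k x, Cnorm x <= r -> dominated (fun n => T n k x) C).
  { intros k x Hx n. refine (proj1 (HT n k x C0 Hx _)). rewrite Cnorm_C0. lra. }
  assert (HC : 0 <= C).
  { pose proof (Hval s z ltac:(lra) O) as H0. pose proof (Cnorm_nonneg (T O s z)).
    unfold weight in H0. simpl in H0. lra. }
  apply (Cderiv_of_quadratic_remainder _ _ _ (4 * C)); [lra|]. intros h Hh.
  assert (Hzh : dominated (fun n => T n s (Cadd z h)) C)
    by (apply Hval; pose proof (Cnorm_triangle z h); lra).
  assert (Hz : dominated (fun n => T n s z) C) by (apply Hval; lra).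
  assert (Hd : dominated (fun n => T n (S s) z) C) by (apply Hval; lra).
  set (m1 := Cof (-1)).
  assert (E : Csub (Csub (CSeries (fun n => T n s (Cadd z h))) (CSeries (fun n => T n s z)))
                   (Cmul (CSeries (fun n => T n (S s) z)) h)
            = CSeries (fun n => Cadd (Cadd (T n s (Cadd z h)) (Cmul m1 (T n s z)))
                                      (Cmul (Cmul m1 h) (T n (S s) z)))).
  { rewrite (CSeries_add _ _ _ _ (dominated_add _ _ _ _ Hzh (dominated_scal m1 _ _ Hz))
                                 (dominated_scal (Cmul m1 h) _ _ Hd)).
    rewrite (CSeries_add _ _ _ _ Hzh (dominated_scal m1 _ _ Hz)).
    rewrite (CSeries_scal _ _ _ Hz), (CSeries_scal _ _ _ Hd). unfold m1. CC_ring. }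
  rewrite E. apply Rle_trans with (4 * (C * (Cnorm h * Cnorm h))); [|lra].
  apply CSeries_bound. intro n.
  replace (Cadd (Cadd (T n s (Cadd z h)) (Cmul m1 (T n s z))) (Cmul (Cmul m1 h) (T n (S s) z)))
    with (taylor_rem (T n) s z h) by (unfold taylor_rem, m1; CC_ring).
  replace (C * (Cnorm h * Cnorm h) * weight n) with (C * weight n * (Cnorm h * Cnorm h)) by ring.
  apply (HT n s z h); lra.
Qed.

Lemma common_bound (P : nat -> R -> Prop) :
  (forall n C C', P n C -> C <= C' -> P n C') -> (forall n, exists C, P n C) ->
  forall N, exists C, 1 <= C /\ forall n, (n < N)%nat -> P n C.
Proof.
  intros Hmono Hex N. induction N as [|N [C [HC1 HC]]].
  - exists 1. split; [lra|]. intros n Hn; lia.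
  - destruct (Hex N) as [C' HC']. exists (Rmax C C'). split.
    + pose proof (Rmax_l C C'). lra.
    + intros n Hn. destruct (Nat.eq_dec n N) as [->|Hne].
      * apply (Hmono N C'); [exact HC'|apply Rmax_r].
      * apply (Hmono n C); [apply HC; lia|apply Rmax_l].
Qed.

(** The construction of f = sum_m coef m * basis m. *)

Definition basis (m : nat) : tower := interp node m.
Definition order (m : nat) : nat := node_order node m.

Lemma basis_bound_ex (m : nat) : exists K, 0 <= K /\ tower_bound (basis m) (INR m) K.
Proof. destruct (tame_interp node m) as [_ HB]. apply HB. Qed.

Definition basis_bound (m : nat) : R :=
  proj1_sig (constructive_indefinite_description _ (basis_bound_ex m)).

Lemma basis_bound_spec (m : nat) : 0 <= basis_bound m /\ tower_bound (basis m) (INR m) (basis_bound m).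
Proof. unfold basis_bound. destruct (constructive_indefinite_description _ _). simpl. auto. Qed.

(* Admissible size of the m-th coefficient: it makes the m-th term at most
   (1/2)^m on the disc of radius m. *)
Definition coef_size (m : nat) : R := weight m / (1 + basis_bound m).

(* Coefficients may be nonzero, which leaves room for the correction. *)
Lemma coef_size_pos (m : nat) : 0 < coef_size m.
Proof.
  unfold coef_size. pose proof (proj1 (basis_bound_spec m)). pose proof (weight_pos m).
  apply Rdiv_lt_0_compat; lra.
Qed.

Definition partial_value (e : nat -> CC) (m : nat) : CC :=
  Csum (fun l => Cmul (e l) (basis l (order m) (node m))) m.

Definition lead_value (m : nat) : CC := basis m (order m) (node m).

Lemma choose_coef_ex (m : nat) (c : CC) : exists x, Cnorm x <= coef_size m /\
  in_Qi (Cadd c (Cmul x (lead_value m))) /\ Cadd c (Cmul x (lead_value m)) <> C0.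
Proof. apply Qi_correction; [apply interp_own_order_neq0|apply coef_size_pos]. Qed.

Definition choose_coef (m : nat) (c : CC) : CC :=
  proj1_sig (constructive_indefinite_description _ (choose_coef_ex m c)).

Fixpoint coef_prefix (m : nat) : nat -> CC :=
  match m with
  | O => fun _ => C0
  | S k => fun l => if Nat.eq_dec l k
                    then choose_coef k (partial_value (coef_prefix k) k)
                    else coef_prefix k l
  end.

Definition coef (l : nat) : CC := coef_prefix (S l) l.

Lemma coef_prefix_coef (m l : nat) : (l < m)%nat -> coef_prefix m l = coef l.
Proof.
  induction m; intros Hl; [lia|]. simpl. destruct (Nat.eq_dec l m) as [->|Hne].
  - unfold coef. simpl. destruct (Nat.eq_dec m m); [reflexivity|congruence].
  - apply IHm. lia.
Qed.

Lemma coef_spec (m : nat) : Cnorm (coef m) <= coef_size m /\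
  in_Qi (Cadd (partial_value coef m) (Cmul (coef m) (lead_value m))) /\
  Cadd (partial_value coef m) (Cmul (coef m) (lead_value m)) <> C0.
Proof.
  assert (Hcoef : coef m = choose_coef m (partial_value coef m)).
  { unfold coef at 1. simpl. destruct (Nat.eq_dec m m); [|congruence].
    f_equal. apply Csum_ext. intros l Hl. rewrite coef_prefix_coef; auto. }
  rewrite Hcoef. unfold choose_coef. destruct (constructive_indefinite_description _ _). simpl. auto.
Qed.

Definition term (n : nat) : tower := tower_scale (coef n) (basis n).

Definition deriv_f (s : nat) (z : CC) : CC := CSeries (fun n => term n s z).

Lemma coef_basis_small (m : nat) : Cnorm (coef m) * basis_bound m <= weight m.
Proof.
  pose proof (proj1 (coef_spec m)) as Hsize. unfold coef_size in Hsize.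
  pose proof (proj1 (basis_bound_spec m)). pose proof (Cnorm_nonneg (coef m)).
  apply (Rmult_le_compat_r (1 + basis_bound m)) in Hsize; [|lra].
  replace (weight m / (1 + basis_bound m) * (1 + basis_bound m)) with (weight m) in Hsize
    by (field; lra).
  nra.
Qed.

(* On any disc, the terms decay like (1/2)^n: the finitely many terms with
   n below the radius are handled one by one, the others by the size condition. *)
Lemma term_bound (r : R) : exists C, forall n, tower_bound (term n) r (C * weight n).
Proof.
  destruct (INR_unbounded r) as [N HN].
  destruct (common_bound (fun n C => tower_bound (term n) r (C * weight n))) with (N := N)
    as [C [HC1 HC]].
  - intros n C C' H HCC'. apply (tower_bound_weaken _ r r (C * weight n)); auto; [lra|].
    apply Rmult_le_compat_r; [left; apply weight_pos|exact HCC'].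
  - intro n. destruct (tame_interp node n) as [_ Hn]. destruct (Hn r) as [K [HK HB]].
    exists (Cnorm (coef n) * K / weight n). unfold term.
    replace (Cnorm (coef n) * K / weight n * weight n) with (Cnorm (coef n) * K)
      by (field; apply Rgt_not_eq, weight_pos).
    apply tower_bound_scale, HB.
  - exists C. intro n. destruct (le_lt_dec N n) as [Hn|Hn]; [|apply HC, Hn].
    apply le_INR in Hn. pose proof (coef_basis_small n). pose proof (weight_pos n).
    apply (tower_bound_weaken _ (INR n) r (Cnorm (coef n) * basis_bound n)); [|lra|nra].
    apply tower_bound_scale, basis_bound_spec.
Qed.

Lemma deriv_f_deriv (s : nat) (z : CC) : Cderiv_at (deriv_f s) z (deriv_f (S s) z).
Proof.
  destruct (term_bound (Cnorm z + 1)) as [C HC].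
  exact (tower_series_deriv term (Cnorm z + 1) C s z (Rle_refl _) HC).
Qed.

Lemma deriv_f_at_node (m : nat) :
  deriv_f (order m) (node m) = Cadd (partial_value coef m) (Cmul (coef m) (lead_value m)).
Proof.
  unfold deriv_f. rewrite (CSeries_finite _ m); [reflexivity|].
  intros n Hn. unfold term, tower_scale, basis, order. rewrite interp_vanishes by lia. CC_ring.
Qed.

(* Every derivative of f at an algebraic point is a nonzero element of Q(i),
   since that pair (point, order) is attached to some index m. *)
Lemma deriv_f_in_Qi (s : nat) (z : CC) : algebraic z -> in_Qi (deriv_f s z) /\ deriv_f s z <> C0.
Proof.
  intros Hz. destruct (every_order_assigned node z (node_recurs z Hz) s) as [m [<- <-]].
  rewrite deriv_f_at_node. apply coef_spec.
Qed.

Lemma algebraic_C0 : algebraic C0.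
Proof.
  exists (0%Z :: 1%Z :: nil). split.
  - exists 1%Z. split; [simpl; auto|lia].
  - simpl. CC_ring.
Qed.

(* A polynomial has vanishing derivatives of high order, whereas every
   derivative of f is nonzero at the algebraic point 0. *)
Lemma f_not_polynomial : ~ is_polynomial_fun (deriv_f O).
Proof.
  intros [cs Hcs].
  assert (Hpoly : forall s z, deriv_f s z = tower_poly cs s z).
  { induction s as [|s IH]; intro z.
    - rewrite tower_poly_eval. apply Hcs.
    - apply (Cderiv_unique (deriv_f s) z); [apply deriv_f_deriv|].
      replace (deriv_f s) with (tower_poly cs s) by (apply functional_extensionality; auto).
      apply tame_deriv, tame_poly. }
  destruct (tame_poly cs) as [[N HN] _].
  apply (proj2 (deriv_f_in_Qi N C0 algebraic_C0)). rewrite Hpoly. apply HN. lia.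
Qed.

Theorem corollary3 :
  exists f : CC -> CC, transcendental_entire f /\
    exists D : nat -> CC -> CC, derivs_of f D /\
      forall (s : nat) (z : CC), algebraic z -> in_Qi (D s z).
Proof.
  exists (deriv_f O). split; [split|].
  - intro z. exists (deriv_f 1 z). apply deriv_f_deriv.
  - exact f_not_polynomial.
  - exists deriv_f. split; [split; [reflexivity|apply deriv_f_deriv]|].
    intros s z Hz. apply (deriv_f_in_Qi s z Hz).
Qed.
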